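(* Consider $p\ge 1$ machines, machine $v$ having nonnegative real parameters $k^A_v,k^B_v,t^A_v,t^B_v$, and a real bound $L$. For $1\le v\le p$ and an integer $a\ge 0$, let $b_v(a)=\{b\in\mathbb{Z}_{\ge 0} : f_v(a,b)\le L\}$ and $$dp(v,a)=\bigcup_{\substack{x_1+\dots+x_v=a\\ x_1,\dots,x_v\in\mathbb{Z}_{\ge 0}}}\big(b_1(x_1)+\dots+b_v(x_v)\big),$$ where $+$ denotes the sumset $X+Y=\{x+y : x\in X, y\in Y\}$. Then for every $1\le v\le p$ and every integer $a\ge 0$: (1) if $dp(v,a)=\emptyset$, then $dp(v,a+\delta)=\emptyset$ for every integer $\delta>0$; (2) if $dp(v,a)\neq\emptyset$ and $dp(v,a+1)\neq\emptyset$, then at least one of the following holds: (i) $dp(v,a)\cap dp(v,a+1)\neq\emptyset$; (ii) there exists $b_0\in dp(v,a)$ with $b_0+1\in dp(v,a+1)$.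
   Context: Each machine $v$ processes jobs of two types, A and B, in batches. A schedule of machine $v$ for the task-combination $(a,b)$ is a finite sequence of batches, each a nonempty group of jobs of a single type, with consecutive batches of different types, processing exactly $a$ A-jobs and $b$ B-jobs. An A-batch of $x$ jobs takes $t^A_v+k^A_v x^2$ time units and a B-batch of $x$ jobs takes $t^B_v+k^B_v x^2$ time units on machine $v$; the time of a schedule is the sum of its batch times (empty schedule: time $0$). $f_v(a,b)$ is the minimum time over all schedules of machine $v$ for $(a,b)$. *)

From mathcomp Require Import all_boot all_order all_algebra.
From mathcomp Require Import classical_sets reals.
Set Implicit Arguments. Unset Strict Implicit. Unset Printing Implicit Defensive.
Import Order.TTheory GRing.Theory Num.Theory.
Local Open Scope classical_set_scope.
Local Open Scope ring_scope.

(* A batch is a pair (type, size); type [true] = A, [false] = B. *)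
Definition batch := (bool * nat)%type.

Definition is_schedule (a b : nat) (s : seq batch) : Prop :=
  [/\ all (fun u : batch => 0 < u.2)%N s,
      sorted (fun u w : batch => u.1 != w.1) s,
      sumn [seq u.2 | u <- s & u.1] = a &
      sumn [seq u.2 | u <- s & ~~ u.1] = b].

Section Machines.
Variable R : realType.
Variables (kA kB tA tB : nat -> R).

Definition sched_time (v : nat) (s : seq batch) : R :=
  \sum_(u <- s) (if u.1 then tA v + kA v * (u.2)%:R ^+ 2
                 else tB v + kB v * (u.2)%:R ^+ 2).

(* f_v(a,b): minimum time over all schedules of machine v for (a,b),
   written as the infimum of the (finite, nonempty) set of schedule times. *)
Definition fv (v a b : nat) : R :=
  inf [set sched_time v s | s in [set s | is_schedule a b s]].

Definition bset (L : R) (v a : nat) : set nat := [set b | fv v a b <= L].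

End Machines.

Definition sumset (X Y : set nat) : set nat :=
  [set (x + y)%N | x in X & y in Y].

(* dp(v,a) = union over x_1+...+x_v = a of b_1(x_1) + ... + b_v(x_v).
   Machine i+1 gets x i, for i : 'I_v. *)
Definition dp (R : realType) (kA kB tA tB : nat -> R) (L : R) (v a : nat)
  : set nat :=
  \bigcup_(x in [set x : 'I_v -> nat | (\sum_(i < v) x i)%N = a])
     \big[sumset/[set 0%N]]_(i < v) bset kA kB tA tB L i.+1 (x i).

From mathcomp Require Import all_boot all_order all_algebra.
From mathcomp Require Import classical_sets reals.
Set Implicit Arguments.
Unset Strict Implicit.
Unset Printing Implicit Defensive.
Import Order.TTheory GRing.Theory Num.Theory.
Local Open Scope classical_set_scope.
Local Open Scope ring_scope.

(* One A-job can be removed from a schedule for (a+1, b) without increasing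
   its time: cut off the trailing B-batches, which leaves a schedule for some
   (a+1, b') with b' <= b, then shrink its final A-batch by one job (or delete it if it has
   one job), which gives a schedule for (a, b'). Since all parameters are
   nonnegative, neither step increases the time, so b_v(a+1) <> {} forces
   b_v(a) and b_v(a+1) to meet. Applying this to a machine with a positive
   share of the A-jobs shows that dp(v, a+1) <> {} forces dp(v, a) and
   dp(v, a+1) to meet, which gives (1) by induction on delta and (2) in
   form (i). *)

Lemma big_sumsetP (v : nat) (F : 'I_v -> set nat) (m : nat) :
  (\big[sumset/[set 0%N]]_(i < v) F i) m <->
  exists2 g : 'I_v -> nat, (forall i, F i (g i)) & m = (\sum_(i < v) g i)%N.
Proof.
elim: v F m => [|v IHv] F m.
  rewrite big_ord0; split => [->|[g _ ->]]; last exact: big_ord0.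
  by exists (fun _ => 0%N) => [[]|]; rewrite ?big_ord0.
rewrite big_ord_recl; split.
- case=> y Fy [_ /IHv[g Fg ->] <-].
  exists (fun i => if unlift ord0 i is Some j then g j else y).
    by move=> i; case: unliftP => [j ->|->].
  rewrite big_ord_recl unlift_none; congr (_ + _)%N.
  by apply: eq_bigr => i _; rewrite liftK.
- case=> g Fg ->; rewrite big_ord_recl.
  exists (g ord0) => //; exists (\sum_(i < v) g (lift ord0 i))%N => //.
  by apply/IHv; exists (fun i => g (lift ord0 i)).
Qed.

Definition comp_sumset (v : nat) (F : 'I_v -> nat -> set nat) (a : nat) : set nat :=
  \bigcup_(x in [set x : 'I_v -> nat | (\sum_(i < v) x i)%N = a])
     \big[sumset/[set 0%N]]_(i < v) F i (x i).

Lemma comp_sumset_succ_meet (v : nat) (F : 'I_v -> nat -> set nat) :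
  (forall i n, F i n.+1 !=set0 -> F i n `&` F i n.+1 !=set0) ->
  forall a, comp_sumset F a.+1 !=set0 -> comp_sumset F a `&` comp_sumset F a.+1 !=set0.
Proof.
move=> F_meet a [_ [x /= sum_x /big_sumsetP[g Fg _]]].
have /existsP[j] : [exists j, x j != 0%N].
  rewrite -negb_forall; apply/negP => /forallP x0.
  by move: sum_x; rewrite big1 // => i _; apply/eqP/x0.
case x_j: (x j) => [//|n] _.
have [b [Fjn Fjn1]] : F j n `&` F j n.+1 !=set0.
  by apply: F_meet; exists (g j); rewrite -x_j.
pose g' i := if i == j then b else g i.
exists (\sum_(i < v) g' i)%N; split.
- exists (fun i => if i == j then n else x i).
    rewrite /= (bigD1 j) //= eqxx (eq_bigr x) => [|i /negbTE -> //].
    by move: sum_x; rewrite (bigD1 j) //= x_j addSn => -[].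
  by apply/big_sumsetP; exists g' => // i; rewrite /g'; case: eqP => [->|_].
- exists x => //; apply/big_sumsetP; exists g' => // i.
  by rewrite /g'; case: eqP => [->|_]; rewrite ?x_j.
Qed.

Lemma is_schedule_rconsA a b s c :
  is_schedule a b (rcons s (true, c)) -> is_schedule (a - c) b s.
Proof.
case; rewrite all_rcons -cats1 !filter_cat !map_cat !sumn_cat /= !addn0.
move=> /andP[_ s_pos].
by case/cat_sorted2 => s_sorted _ <- <-; rewrite addnK.
Qed.

Lemma is_schedule_rconsB a b s c :
  is_schedule a b (rcons s (false, c)) -> is_schedule a (b - c) s.
Proof.
case; rewrite all_rcons -cats1 !filter_cat !map_cat !sumn_cat /= !addn0.
move=> /andP[_ s_pos].
by case/cat_sorted2 => s_sorted _ <- <-; rewrite addnK.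
Qed.

Lemma is_schedule_shrink_lastA a b s c :
  is_schedule a.+1 b (rcons s (true, c.+2)) -> is_schedule a b (rcons s (true, c.+1)).
Proof.
case=> s_pos s_sorted sumA sumB; split.
- by move: s_pos; rewrite !all_rcons => /andP[_ ->].
- by case: s s_sorted {s_pos sumA sumB} => //= u s; rewrite !rcons_path.
- by move: sumA; rewrite !filter_rcons !map_rcons !sumn_rcons addnS => -[].
- by move: sumB; rewrite !filter_rcons.
Qed.

Lemma is_schedule_lastA a b s : is_schedule a.+1 b s ->
  exists s0 c t b', [/\ s = rcons s0 (true, c.+1) ++ t, (b' <= b)%N
                      & is_schedule a.+1 b' (rcons s0 (true, c.+1))].
Proof.
elim/last_ind: s b => [|s [[] c] IHs] b; first by case.
- move=> sched; have c_gt0 : (0 < c)%N by case: sched; rewrite all_rcons => /andP[].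
  by exists s, c.-1, [::], b; rewrite prednK // cats0.
- move=> /is_schedule_rconsB /IHs[s0 [c' [t [b' [-> le_b' sched]]]]].
  exists s0, c', (rcons t (false, c)), b'; split=> //; first by rewrite rcons_cat.
  exact: leq_trans le_b' (leq_subr c b).
Qed.

Lemma is_schedule_exists a b : exists s, is_schedule a b s.
Proof.
case: a => [|a]; case: b => [|b].
- by exists [::].
- by exists [:: (false, b.+1)]; split => //=; rewrite addn0.
- by exists [:: (true, a.+1)]; split => //=; rewrite addn0.
- by exists [:: (true, a.+1); (false, b.+1)]; split => //=; rewrite addn0.
Qed.

Section MachineTime.
Variables (R : realType) (kA kB tA tB : nat -> R) (w : nat).
Hypotheses (kA_ge0 : 0 <= kA w) (kB_ge0 : 0 <= kB w).
Hypotheses (tA_ge0 : 0 <= tA w) (tB_ge0 : 0 <= tB w).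

Local Notation T := (sched_time kA kB tA tB w).
Local Notation f := (fv kA kB tA tB w).

Lemma sched_time_cat s t : T (s ++ t) = T s + T t.
Proof. exact: big_cat. Qed.

Lemma sched_time_ge0 s : 0 <= T s.
Proof. by apply: sumr_ge0 => -[[] n] _ /=; rewrite addr_ge0 ?mulr_ge0 ?exprn_ge0. Qed.

Lemma sched_time_le_cat s t : T s <= T (s ++ t).
Proof. by rewrite sched_time_cat lerDl sched_time_ge0. Qed.

Lemma sched_time_shrink_lastA s c :
  T (rcons s (true, c.+1)) <= T (rcons s (true, c.+2)).
Proof.
rewrite -!cats1 !sched_time_cat lerD2l /sched_time !big_seq1 /= lerD2l.
by rewrite ler_wpM2l // -!natrX ler_nat leq_exp2r.
Qed.

Lemma is_schedule_predA a b s c : is_schedule a.+1 b (rcons s (true, c.+1)) ->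
  exists2 s', is_schedule a b s' & T s' <= T (rcons s (true, c.+1)).
Proof.
case: c => [|c] sched.
- exists s; last by rewrite -cats1 sched_time_le_cat.
  by have := is_schedule_rconsA sched; rewrite subn1.
- exists (rcons s (true, c.+1)); first exact: is_schedule_shrink_lastA.
  exact: sched_time_shrink_lastA.
Qed.

Lemma fv_le_sched_time a b s : is_schedule a b s -> f a b <= T s.
Proof.
move=> sched; apply: ge_inf; last by exists s.
by exists 0 => _ [s' _ <-]; apply: sched_time_ge0.
Qed.

Lemma fv_ge a b m : (forall s, is_schedule a b s -> m <= T s) -> m <= f a b.
Proof.
move=> le_m; apply: lb_le_inf => [|_ [s sched <-]]; last exact: le_m.
by have [s sched] := is_schedule_exists a b; exists (T s), s.
Qed.

Lemma fv_succ_pred_le_sched_time a b s : is_schedule a.+1 b s ->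
  exists2 b', (b' <= b)%N & Num.max (f a.+1 b') (f a b') <= T s.
Proof.
case/is_schedule_lastA => s0 [c [t [b' [-> le_b' sched]]]].
have [s' sched' le_s'] := is_schedule_predA sched.
exists b' => //; rewrite ge_max; apply/andP; split.
- exact: le_trans (fv_le_sched_time sched) (sched_time_le_cat _ t).
- apply: le_trans (fv_le_sched_time sched') _.
  exact: le_trans le_s' (sched_time_le_cat _ t).
Qed.

Lemma bset_succ_meet L a : bset kA kB tA tB L w a.+1 !=set0 ->
  bset kA kB tA tB L w a `&` bset kA kB tA tB L w a.+1 !=set0.
Proof.
case=> b /= fb.
(* Rather than proving that the infimum [f] is attained, we take the
   [j <= b] minimising [max (f a.+1 j) (f a j)]; by the previous lemma it is
   a lower bound for all schedule times of (a+1, b). *)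
pose g (j : 'I_b.+1) := Num.max (f a.+1 j) (f a j).
have [i _ g_min] := @arg_minP _ R _ ord0 xpredT g isT.
suff : g i <= L by rewrite ge_max => /andP[? ?]; exists (val i).
apply: le_trans fb; apply: fv_ge => s /fv_succ_pred_le_sched_time[b' le_b' le_s].
have lt_b' : (b' < b.+1)%N by rewrite ltnS.
exact: le_trans (g_min (Ordinal lt_b') isT) le_s.
Qed.

End MachineTime.

Lemma dp_succ_meet (R : realType) (kA kB tA tB : nat -> R) (L : R) (v a : nat) :
  (forall i, (i < v)%N ->
     [/\ 0 <= kA i.+1, 0 <= kB i.+1, 0 <= tA i.+1 & 0 <= tB i.+1]) ->
  dp kA kB tA tB L v a.+1 !=set0 ->
  dp kA kB tA tB L v a `&` dp kA kB tA tB L v a.+1 !=set0.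
Proof.
move=> par_ge0.
apply: (comp_sumset_succ_meet (F := fun i : 'I_v => bset kA kB tA tB L i.+1)).
move=> i n; have [kA0 kB0 tA0 tB0] := par_ge0 i (ltn_ord i).
exact: (bset_succ_meet kA0 kB0 tA0 tB0).
Qed.

Theorem lemma5 (R : realType) (p : nat) (kA kB tA tB : nat -> R) (L : R)
  (hp : (1 <= p)%N)
  (hpar : forall v : nat, (1 <= v <= p)%N ->
     [/\ 0 <= kA v, 0 <= kB v, 0 <= tA v & 0 <= tB v]) :
  forall v a : nat, (1 <= v <= p)%N ->
    (dp kA kB tA tB L v a = set0 ->
       forall delta : nat, (0 < delta)%N ->
         dp kA kB tA tB L v (a + delta) = set0) /\
    (dp kA kB tA tB L v a !=set0 -> dp kA kB tA tB L v a.+1 !=set0 ->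
       (dp kA kB tA tB L v a `&` dp kA kB tA tB L v a.+1 !=set0) \/
       (exists2 b0, dp kA kB tA tB L v a b0 & dp kA kB tA tB L v a.+1 b0.+1)).
Proof.
move=> v a /andP[_ le_vp].
have par_ge0 i : (i < v)%N ->
    [/\ 0 <= kA i.+1, 0 <= kB i.+1, 0 <= tA i.+1 & 0 <= tB i.+1].
  by move=> lt_iv; apply: hpar; rewrite /= (leq_trans lt_iv le_vp).
have dp_addn_ne0 d :
    dp kA kB tA tB L v (a + d) !=set0 -> dp kA kB tA tB L v a !=set0.
  elim: d => [|d IHd]; first by rewrite addn0.
  by rewrite addnS => /(dp_succ_meet par_ge0)[b [dp_b _]]; apply: IHd; exists b.
split=> [dp0 d _ | _ /(dp_succ_meet par_ge0) ?]; last by left.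
apply/seteqP; split=> // b dp_b.
by have [b0] := dp_addn_ne0 d (ex_intro _ b dp_b); rewrite dp0.
Qed.
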